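(* Let $X$ be a nonempty set, $S$ a semigroup and $\phi':X\to E(S)$ a one-to-one mapping. If $\phi'$ induces a unique skeleton $A$ of $S$, then $\langle A\rangle$ is the smallest regular subsemigroup of $S$ containing $X\phi'$. In particular, if moreover $\langle A\rangle=S$, then $S$ is regular and has no proper regular subsemigroup containing $X\phi'$ (i.e. $(S,\phi')$ is weakly idempotent generated by $X$).
   Context: Let $1$ be a symbol not in $X$. Elements of height $\ge 2$ are triples $g=(g^l,g^c,g^r)$; $\Gamma_0(X)=\{1\}$, $\Gamma_1(X)=X$, each $x\in X$ identified with $(1,x,1)$; for $i\ge 2$, $\Gamma_i(X)$ is the set of triples $g\in\Gamma_{i-1}(X)\times\Gamma_{i-2}(X)\times\Gamma_{i-1}(X)$ with $g^l\neq g^r$ and $g^c\in\{(g^l)^l,(g^l)^r\}\cap\{(g^r)^l,(g^r)^r\}$; $\Gamma(X)=\bigcup_{i\ge0}\Gamma_i(X)$. $S^1$ is $S$ with an identity adjoined if necessary; $E(\cdot)$ is the set of idempotents. For idempotents $e,f$ of a semigroup $R$, $S(e,f)=\{h\in E(R): fh=h=he,\ ehf=ef\}$. A skeleton mapping is a mapping $\phi:\Gamma(X)\to E(S^1)$ such that (i) $\phi|_X$ is one-to-one with $X\phi\subseteq E(S)$; (ii) $(1\phi)(g\phi)=g\phi=(g\phi)(1\phi)$ for all $g\in X$; (iii) $g\phi\in S\big((g^r\phi)(g^c\phi),(g^c\phi)(g^l\phi)\big)$ (in $S^1$) for all $g\in\Gamma_i(X)$, $i\ge2$. A skeleton of $S$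 induced by $\phi'$ is a set $(\Gamma(X)\setminus\{1\})\phi$ where $\phi$ is a skeleton mapping with $\phi|_X=\phi'$; ''$\phi'$ induces a unique skeleton $A$'' means $A$ is the only such set. *)

Set Implicit Arguments.
Unset Strict Implicit.

Section Defs.
Variable X : Type.

(* Raw trees over X ∪ {1}: G1 is the symbol 1, GX x is x ∈ X (identified with
   the triple (1,x,1)), GT l c r is a triple (l,c,r). *)
Inductive gtree : Type :=
| G1 : gtree
| GX : X -> gtree
| GT : gtree -> gtree -> gtree -> gtree.

(* g^l and g^r; for x ∈ X, x = (1,x,1) so x^l = x^r = 1.
   The value on G1 is irrelevant (never used). *)
Definition glft (g : gtree) : gtree :=
  match g with G1 => G1 | GX _ => G1 | GT l _ _ => l end.
Definition grgt (g : gtree) : gtree :=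
  match g with G1 => G1 | GX _ => G1 | GT _ _ r => r end.

Fixpoint Gamma (i : nat) (g : gtree) : Prop :=
  match i with
  | 0 => g = G1
  | S 0 => exists x, g = GX x
  | S ((S j) as k) =>
      exists l c r, g = GT l c r /\ Gamma k l /\ Gamma j c /\ Gamma k r /\
        l <> r /\ (c = glft l \/ c = grgt l) /\ (c = glft r \/ c = grgt r)
  end.

Definition inGamma (g : gtree) : Prop := exists i, Gamma i g.
End Defs.

Arguments G1 {X}.

Section Semigroup.
Variable S : Type.
Variable mul : S -> S -> S.

(* S^1 : S with an identity (None) adjoined. *)
Definition mul1 (a b : option S) : option S :=
  match a, b with
  | None, _ => b
  | _, None => a
  | Some x, Some y => Some (mul x y)
  end.

Definition idem1 (e : option S) : Prop := mul1 e e = e.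

Definition sandwich (e f h : option S) : Prop :=
  idem1 h /\ mul1 f h = h /\ h = mul1 h e /\ mul1 (mul1 e h) f = mul1 e f.

Definition skeleton_mapping (X : Type) (phi : gtree X -> option S) : Prop :=
  (forall g, inGamma g -> idem1 (phi g)) /\
  (forall x, exists s, phi (GX x) = Some s /\ mul s s = s) /\
  (forall x y, phi (GX x) = phi (GX y) -> x = y) /\
  (forall x, mul1 (phi G1) (phi (GX x)) = phi (GX x) /\
             mul1 (phi (GX x)) (phi G1) = phi (GX x)) /\
  (forall i l c r, Gamma (Datatypes.S (Datatypes.S i)) (GT l c r) ->
     sandwich (mul1 (phi r) (phi c)) (mul1 (phi c) (phi l)) (phi (GT l c r))).

Definition extends (X : Type) (phi : gtree X -> option S) (phi' : X -> S) : Prop :=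
  forall x, phi (GX x) = Some (phi' x).

Definition skeleton_of (X : Type) (phi : gtree X -> option S) (a : option S) : Prop :=
  exists g, inGamma g /\ g <> G1 /\ phi g = a.

Definition unique_skeleton (X : Type) (phi' : X -> S) (A : option S -> Prop) : Prop :=
  (exists phi, skeleton_mapping phi /\ extends phi phi') /\
  (forall phi, skeleton_mapping phi -> extends phi phi' ->
     forall a, skeleton_of phi a <-> A a).

Definition generated (A : option S -> Prop) (a : option S) : Prop :=
  forall T : option S -> Prop, (forall b, A b -> T b) ->
    (forall b c, T b -> T c -> T (mul1 b c)) -> T a.

Definition regular_subsemigroup (T : S -> Prop) : Prop :=
  (forall a b, T a -> T b -> T (mul a b)) /\
  (forall a, T a -> exists b, T b /\ mul (mul a b) a = a).

Definition regular_semigroup : Prop :=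
  forall a, exists b, mul (mul a b) a = a.
End Semigroup.

(* Minimality: in a regular subsemigroup T containing X phi', every sandwich set
   S(e, f) of idempotents e, f of T meets T (it contains f x e for any inverse x of
   e f in T), so a skeleton mapping with values in T can be built level by level on
   Gamma(X); by uniqueness its skeleton is A, hence <A> is contained in T.

   Regularity: join each node g of Gamma(X) to g^l and g^r. Any two nodes g, h are
   linked by a walk whose idempotents multiply to (g phi)(h phi) (descend to a leaf,
   cross through a node (z, 1, x), ascend), so every element of <A> is the product
   along a walk. Such products have an inverse in <A>, by induction on the length: a
   first step up or a last step down is absorbed because (g phi)(g^l phi)(g phi) =
   g phi. Otherwise the walk descends and then ascends; at the first valley
   p > c < d either p = d and the backtrack collapses, or (d, c, p) is in Gamma(X)
   and replacing c by this peak keeps the product, as (p phi)(c phi)(d phi) =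
   (p phi)((d, c, p) phi)(d phi), while moving the first ascent towards the start. *)

From Stdlib Require Import Lia Classical ClassicalEpsilon.
Set Implicit Arguments.
Unset Strict Implicit.

Section Trees.
Variable X : Type.

Definition gnode (g : gtree X) := inGamma g /\ g <> G1.
Definition gchild (a b : gtree X) := a = glft b \/ a = grgt b.

Lemma Gamma_G1_inv i : Gamma i (@G1 X) -> i = 0.
Proof.
  destruct i as [|[|i]]; simpl; [auto|intros [x E]|intros (l & c & r & E & _)]; discriminate.
Qed.

Lemma Gamma_GX_inv i (x : X) : Gamma i (GX x) -> i = 1.
Proof.
  destruct i as [|[|i]]; simpl; [discriminate|auto|intros (l & c & r & E & _); discriminate].
Qed.

Lemma Gamma_GT_inv i (l c r : gtree X) : Gamma i (GT l c r) ->
  exists j, i = S (S j) /\ Gamma (S j) l /\ Gamma j c /\ Gamma (S j) r /\ l <> r /\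
    gchild c l /\ gchild c r.
Proof.
  destruct i as [|[|j]]; simpl; [discriminate|intros [x E]; discriminate|].
  intros (l' & c' & r' & E & Hl & Hc & Hr & Hlr & Hcl & Hcr).
  injection E as -> -> ->. exists j. unfold gchild. tauto.
Qed.

Lemma Gamma_level_unique (g : gtree X) : forall i j, Gamma i g -> Gamma j g -> i = j.
Proof.
  induction g as [|x|l IHl c _ r _]; intros i j Hi Hj.
  - now rewrite (Gamma_G1_inv Hi), (Gamma_G1_inv Hj).
  - now rewrite (Gamma_GX_inv Hi), (Gamma_GX_inv Hj).
  - destruct (Gamma_GT_inv Hi) as (i' & -> & Hl & _).
    destruct (Gamma_GT_inv Hj) as (j' & -> & Hl' & _).
    now rewrite (IHl _ _ Hl Hl').
Qed.

Lemma gnode_of_Gamma i (g : gtree X) : Gamma (S i) g -> gnode g.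
Proof.
  intros Hg. split; [now exists (S i)|]. intros ->. now apply Gamma_G1_inv in Hg.
Qed.

Lemma gnode_GX (x : X) : gnode (GX x).
Proof. apply (@gnode_of_Gamma 0). simpl. eauto. Qed.

Lemma gchild_level i (a b : gtree X) : Gamma i b -> gchild a b -> a <> G1 ->
  exists j, i = S (S j) /\ Gamma (S j) a.
Proof.
  intros Hb Hab Ha.
  destruct b as [|x|l c r]; [destruct Hab as [->| ->]; easy..|].
  destruct (Gamma_GT_inv Hb) as (j & -> & Hl & _ & Hr & _).
  exists j. destruct Hab as [->| ->]; auto.
Qed.

Lemma valley_Gamma (v p x : gtree X) : gnode v -> gnode p -> gnode x ->
  gchild v p -> gchild v x -> p <> x -> exists i, Gamma (S (S i)) (GT x v p).
Proof.
  intros Hv [[ip Hp] _] [[ix Hx] _] Hvp Hvx Hpx.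
  destruct (gchild_level Hp Hvp (proj2 Hv)) as (j & -> & Hj).
  destruct (gchild_level Hx Hvx (proj2 Hv)) as (j' & -> & Hj').
  rewrite <- (Gamma_level_unique Hj Hj') in Hx.
  exists (S j). simpl. exists x, v, p. unfold gchild in *. intuition.
Qed.

End Trees.

Section Skeletons.
Variable M : Type.
Variable mul : M -> M -> M.
Hypothesis mul_assoc : forall a b c, mul a (mul b c) = mul (mul a b) c.
Local Notation "a ** b" := (mul1 mul a b) (at level 40, left associativity).

Lemma mul1A a b c : a ** (b ** c) = a ** b ** c.
Proof. destruct a, b, c; simpl; try rewrite mul_assoc; reflexivity. Qed.

Lemma mul1_none_r a : a ** None = a.
Proof. destruct a; reflexivity. Qed.

Ltac reassoc := repeat rewrite mul1A; reflexivity.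

Lemma absorbed_products_idem a b :
  b ** a ** b = b -> idem1 mul (b ** a) /\ idem1 mul (a ** b).
Proof.
  intros Hbab; unfold idem1; split.
  - replace (b ** a ** (b ** a)) with (b ** a ** b ** a) by reassoc. now rewrite Hbab.
  - replace (a ** b ** (a ** b)) with (a ** (b ** a ** b)) by reassoc. now rewrite Hbab.
Qed.

Lemma sandwich_absorbs kl kc kr h : kc ** kc = kc ->
  sandwich mul (kr ** kc) (kc ** kl) h -> h ** kl ** h = h /\ h ** kr ** h = h.
Proof.
  intros Hc (Hh & Hfh & Hhe & Hehf); unfold idem1 in Hh.
  assert (Hkey : h ** (kr ** kc ** kl) ** h = h).
  { replace (kr ** kc ** kl) with (kr ** kc ** h ** (kc ** kl))
      by (rewrite Hehf, mul1A, <- (mul1A kr kc kc), Hc; reflexivity).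
    replace (h ** (kr ** kc ** h ** (kc ** kl)) ** h)
      with (h ** (kr ** kc) ** h ** (kc ** kl ** h)) by reassoc.
    now rewrite <- Hhe, Hfh, !Hh. }
  split.
  - transitivity (h ** (kr ** kc ** kl) ** h); [|exact Hkey].
    rewrite Hhe at 1. reassoc.
  - transitivity (h ** (kr ** kc ** kl) ** h); [|exact Hkey].
    rewrite <- Hfh at 2. reassoc.
Qed.

Lemma sandwich_valley kp kv kx h : kv ** kv = kv ->
  sandwich mul (kp ** kv) (kv ** kx) h -> kp ** kv ** kx = kp ** h ** kx.
Proof.
  intros Hv (_ & Hfh & Hhe & Hehf).
  assert (Hvh : kv ** h = h) by (rewrite <- Hfh, !mul1A, Hv; reflexivity).
  assert (Hhv : h ** kv = h).
  { rewrite Hhe. replace (h ** (kp ** kv) ** kv) with (h ** (kp ** (kv ** kv))) by reassoc.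
    now rewrite Hv. }
  transitivity (kp ** kv ** h ** (kv ** kx)).
  - rewrite Hehf, mul1A, <- (mul1A kp kv kv), Hv. reflexivity.
  - replace (kp ** kv ** h ** (kv ** kx)) with (kp ** (kv ** h) ** kv ** kx) by reassoc.
    rewrite Hvh. replace (kp ** h ** kv ** kx) with (kp ** (h ** kv) ** kx) by reassoc.
    now rewrite Hhv.
Qed.

Lemma sandwich_of_inverse e f x : e ** e = e -> f ** f = f ->
  e ** f ** x ** (e ** f) = e ** f -> sandwich mul e f (f ** x ** (e ** f) ** x ** e).
Proof.
  intros He Hf Hx; unfold sandwich, idem1; repeat split.
  - replace (f ** x ** (e ** f) ** x ** e ** (f ** x ** (e ** f) ** x ** e))
      with (f ** x ** ((e ** f ** x ** (e ** f)) ** x ** (e ** f)) ** x ** e) by reassoc.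
    now rewrite !Hx.
  - rewrite !mul1A, Hf. reflexivity.
  - now rewrite <- (mul1A _ e e), He.
  - replace (e ** (f ** x ** (e ** f) ** x ** e) ** f)
      with (e ** f ** x ** (e ** f) ** x ** (e ** f)) by reassoc.
    now rewrite !Hx.
Qed.

Lemma inverse_extend_l a b P Q : b ** a ** b = b -> b ** P = P -> P ** Q ** P = P ->
  a ** P ** (Q ** b) ** (a ** P) = a ** P.
Proof.
  intros Hbab HbP HP.
  transitivity (a ** P ** (Q ** b) ** (a ** (b ** P))); [now rewrite HbP|].
  replace (a ** P ** (Q ** b) ** (a ** (b ** P)))
    with (a ** (P ** Q ** (b ** a ** b) ** P)) by reassoc.
  rewrite Hbab. replace (P ** Q ** b ** P) with (P ** Q ** (b ** P)) by reassoc.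
  now rewrite HbP, HP.
Qed.

Lemma inverse_extend_r a b P Q : b ** a ** b = b -> P ** b = P -> P ** Q ** P = P ->
  P ** a ** (b ** Q) ** (P ** a) = P ** a.
Proof.
  intros Hbab HPb HP.
  transitivity (P ** b ** a ** (b ** Q) ** (P ** a)); [now rewrite HPb|].
  replace (P ** b ** a ** (b ** Q) ** (P ** a))
    with (P ** (b ** a ** b) ** Q ** P ** a) by reassoc.
  rewrite Hbab, HPb, HP. reflexivity.
Qed.

Lemma generated_mul (A : option M -> Prop) b c :
  generated mul A b -> generated mul A c -> generated mul A (b ** c).
Proof. intros Hb Hc T HA HT. apply HT; [apply Hb|apply Hc]; auto. Qed.

Section Walks.
Variable N : Type.
Variable vertex : N -> Prop.
Variable e : N -> option M.
Variable child : N -> N -> Prop.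
Variable A : option M -> Prop.
Hypothesis e_idem : forall v, vertex v -> e v ** e v = e v.
Hypothesis child_absorb :
  forall a b, vertex a -> vertex b -> child a b -> e b ** e a ** e b = e b.
Hypothesis valley_to_peak : forall v p x, vertex v -> vertex p -> vertex x ->
  child v p -> child v x -> p <> x ->
  exists h, vertex h /\ child p h /\ child x h /\ e p ** e v ** e x = e p ** e h ** e x.
Hypothesis A_spec : forall b, A b <-> exists v, vertex v /\ e v = b.

Inductive walk (E : N -> N -> Prop) : N -> N -> nat -> option M -> Prop :=
| walk_nil a : vertex a -> walk E a a 0 (e a)
| walk_cons a b z n P : vertex a -> E a b -> walk E b z n P -> walk E a z (S n) (e a ** P).

Definition adjacent a b := child a b \/ child b a.
Local Notation descent := (walk (fun a b => child b a)).

Lemma walk_head_vertex E a z n P : walk E a z n P -> vertex a.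
Proof. now destruct 1. Qed.

Lemma walk_last_vertex E a z n P : walk E a z n P -> vertex z.
Proof. now induction 1. Qed.

Lemma walk_head E a z n P : walk E a z n P -> e a ** P = P.
Proof. destruct 1; [now apply e_idem|]. now rewrite mul1A, e_idem. Qed.

Lemma walk_last E a z n P : walk E a z n P -> P ** e z = P.
Proof.
  induction 1 as [a Ha|a b z n P Ha Hab Hw IH]; [now apply e_idem|].
  now rewrite <- mul1A, IH.
Qed.

Lemma walk_app E a b z n m P Q :
  walk E a b n P -> walk E b z m Q -> walk E a z (n + m) (P ** Q).
Proof.
  intros HP HQ; induction HP as [a Ha|a b' b n P Ha Hab Hw IH].
  - now rewrite (walk_head HQ).
  - rewrite <- mul1A. econstructor; eauto.
Qed.

Lemma walk_mono (E E' : N -> N -> Prop) a z n P :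
  (forall a b, E a b -> E' a b) -> walk E a z n P -> walk E' a z n P.
Proof. intros HE; induction 1; econstructor; eauto. Qed.

Lemma walk_snoc_inv E n : forall a c P, walk E a c (S n) P ->
  exists b Q, walk E a b n Q /\ E b c /\ vertex c /\ P = Q ** e c.
Proof.
  induction n as [|n IH]; intros a c P Hw; inversion Hw as [|? b ? ? P' Ha Hab Hw']; subst.
  - inversion Hw'; subst. exists a, (e a). repeat split; auto. constructor; auto.
  - destruct (IH _ _ _ Hw') as (b' & Q & HQ & Hb'c & Hc & ->).
    exists b', (e a ** Q). repeat split; auto.
    + econstructor; eauto.
    + apply mul1A.
Qed.

Lemma walk_split_descent a z n P : walk adjacent a z n P ->
  descent a z n P \/
  exists c d j m D Q, descent a c j D /\ child c d /\ walk adjacent d z m Q /\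
    n = j + S m /\ P = D ** Q.
Proof.
  induction 1 as [a Ha|a b z n P Ha [Hup|Hdown] Hw IH].
  - left. now constructor.
  - right. exists a, b, 0, n, (e a), P. repeat split; auto. now constructor.
  - destruct IH as [Hd|(c & d & j & m & D & Q & Hd & Hcd & HQ & -> & ->)].
    + left. econstructor; eauto.
    + right. exists c, d, (S j), m, (e a ** D), Q. repeat split; auto.
      * econstructor; eauto.
      * apply mul1A.
Qed.

Definition gen_regular P := exists Q, generated mul A Q /\ P ** Q ** P = P.

Lemma generated_vertex v : vertex v -> generated mul A (e v).
Proof. intros Hv T HA _. apply HA, A_spec. eauto. Qed.

Lemma gen_regular_vertex v : vertex v -> gen_regular (e v).
Proof.
  intros Hv. exists (e v). split; [now apply generated_vertex|]. now rewrite !e_idem.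
Qed.

Lemma gen_regular_cons_up a b P : vertex b -> child a b -> vertex a ->
  e b ** P = P -> gen_regular P -> gen_regular (e a ** P).
Proof.
  intros Hb Hab Ha HbP (Q & HQ & HP). exists (Q ** e b). split.
  - apply generated_mul; auto using generated_vertex.
  - apply inverse_extend_l; auto.
Qed.

Lemma gen_regular_snoc_down a b P : vertex b -> child a b -> vertex a ->
  P ** e b = P -> gen_regular P -> gen_regular (P ** e a).
Proof.
  intros Hb Hab Ha HPb (Q & HQ & HP). exists (e b ** Q). split.
  - apply generated_mul; auto using generated_vertex.
  - apply inverse_extend_r; auto.
Qed.

Lemma descent_regular n a z P :
  (forall m a z P, m < n -> walk adjacent a z m P -> gen_regular P) ->
  descent a z n P -> gen_regular P.
Proof.
  intros IH Hd. destruct n as [|n].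
  - inversion Hd; subst. now apply gen_regular_vertex.
  - destruct (walk_snoc_inv Hd) as (b & Q & HQ & Hzb & Hz & ->).
    apply gen_regular_snoc_down with b; eauto using walk_last_vertex, walk_last.
    apply (IH n a b); auto.
    apply walk_mono with (2 := HQ). intros x y Hyx. now right.
Qed.

Lemma valley_regular n z :
  (forall m a z P, m < n -> walk adjacent a z m P -> gen_regular P) ->
  forall j a c d m D Q, descent a c j D -> child c d -> walk adjacent d z m Q ->
  n = j + S m -> gen_regular (D ** Q).
Proof.
  intros IH j; induction j as [|j IHj]; intros a c d m D Q Hd Hcd HQ En.
  - inversion Hd; subst.
    apply gen_regular_cons_up with d; eauto using walk_head_vertex, walk_head.
    apply (IH m d z); auto.
  - destruct (walk_snoc_inv Hd) as (p & D' & HD' & Hcp & Hc & ->).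
    pose proof (walk_last_vertex HD') as Hp. pose proof (walk_head_vertex HQ) as Hdv.
    destruct (classic (p = d)) as [<- | Hpd].
    + rewrite <- (walk_last HD'), <- (walk_head HQ).
      replace (D' ** e p ** e c ** (e p ** Q))
        with (D' ** (e p ** e c ** e p) ** Q) by reassoc.
      rewrite child_absorb, (walk_last HD'); auto.
      apply (IH (j + m) a z); [lia|].
      apply walk_app with p; auto.
      apply walk_mono with (2 := HD'). intros x y Hyx. now right.
    + destruct (valley_to_peak Hc Hp Hdv Hcp Hcd Hpd) as (h & Hh & Hph & Hdh & Hpeak).
      rewrite <- (walk_last HD'), <- (walk_head HQ).
      replace (D' ** e p ** e c ** (e d ** Q))
        with (D' ** (e p ** e c ** e d) ** Q) by reassoc.
      rewrite Hpeak.
      replace (D' ** (e p ** e h ** e d) ** Q)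
        with (D' ** e p ** (e h ** (e d ** Q))) by reassoc.
      rewrite (walk_last HD'), (walk_head HQ).
      apply (IHj a p h (S m)); auto; [|lia].
      econstructor; eauto. now right.
Qed.

Lemma walk_regular n : forall a z P, walk adjacent a z n P -> gen_regular P.
Proof.
  induction n as [n IH] using Wf_nat.lt_wf_ind; intros a z P Hw.
  destruct (walk_split_descent Hw) as [Hd|(c & d & j & m & D & Q & Hd & Hcd & HQ & En & ->)].
  - apply descent_regular with n a z; auto. intros m; eauto.
  - apply valley_regular with n z j a c d m; auto. intros m'; eauto.
Qed.

Hypothesis connected : forall p q, vertex p -> vertex q ->
  exists n, walk adjacent p q n (e p ** e q).

Lemma generated_walk s : generated mul A s -> exists a z n, walk adjacent a z n s.
Proof.
  intros Hs. apply Hs.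
  - intros b Hb. apply A_spec in Hb as (v & Hv & <-). exists v, v, 0. now constructor.
  - intros b c (a1 & y & n1 & Hb) (a2 & z & n2 & Hc).
    destruct (connected (walk_last_vertex Hb) (walk_head_vertex Hc)) as (k & Hyz).
    exists a1, z, (n1 + k + n2).
    replace (b ** c) with (b ** (e y ** e a2) ** c)
      by (rewrite mul1A, (walk_last Hb), <- mul1A, (walk_head Hc); reflexivity).
    apply walk_app with a2; auto. apply walk_app with y; auto.
Qed.

Lemma generated_regular s : generated mul A s -> gen_regular s.
Proof.
  intros Hs. destruct (generated_walk Hs) as (a & z & n & Hw). eapply walk_regular; eauto.
Qed.

End Walks.

Section SkeletonMapping.
Variable X : Type.
Variable phi : gtree X -> option M.
Hypothesis phi_idem : forall g, inGamma g -> idem1 mul (phi g).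
Hypothesis phi_unit : forall x,
  phi G1 ** phi (GX x) = phi (GX x) /\ phi (GX x) ** phi G1 = phi (GX x).
Hypothesis phi_sandwich : forall i l c r, Gamma (S (S i)) (GT l c r) ->
  sandwich mul (phi r ** phi c) (phi c ** phi l) (phi (GT l c r)).

Local Notation twalk := (walk (@gnode X) phi (adjacent (@gchild X))).

Lemma phi_gnode_idem v : gnode v -> phi v ** phi v = phi v.
Proof. intros [Hv _]. now apply phi_idem. Qed.

Lemma phi_child_absorb a b :
  gnode a -> gnode b -> gchild a b -> phi b ** phi a ** phi b = phi b.
Proof.
  intros Ha [[i Hb] _] Hab.
  destruct b as [|x|l c r]; [destruct Hab as [->| ->]; now destruct Ha..|].
  destruct (Gamma_GT_inv Hb) as (j & -> & _ & Hc & _).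
  destruct (sandwich_absorbs (phi_idem (ex_intro _ j Hc)) (phi_sandwich Hb)) as [Hl Hr].
  now destruct Hab as [-> | ->].
Qed.

Lemma phi_valley v p x : gnode v -> gnode p -> gnode x -> gchild v p -> gchild v x -> p <> x ->
  exists h, gnode h /\ gchild p h /\ gchild x h /\
    phi p ** phi v ** phi x = phi p ** phi h ** phi x.
Proof.
  intros Hv Hp Hx Hvp Hvx Hpx.
  destruct (valley_Gamma Hv Hp Hx Hvp Hvx Hpx) as (i & Hh).
  exists (GT x v p). split; [exact (gnode_of_Gamma Hh)|].
  split; [now right|]. split; [now left|].
  exact (sandwich_valley (phi_idem (proj1 Hv)) (phi_sandwich Hh)).
Qed.

Lemma phi_descent_to_leaf i : forall p, Gamma (S i) p -> exists x n, twalk p (GX x) n (phi p).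
Proof.
  induction i as [i IH] using Wf_nat.lt_wf_ind; intros p Hp.
  destruct i as [|i].
  - destruct Hp as [x ->]. exists x, 0. constructor. apply gnode_GX.
  - pose proof (gnode_of_Gamma Hp) as Hpn.
    pose proof Hp as (l & c & r & -> & _ & Hc & Hr & _ & _ & Hcr).
    pose proof (phi_sandwich Hp) as (_ & _ & Hhe & _).
    destruct i as [|i].
    + destruct Hr as [y ->]. simpl in Hc; subst c. exists y, 1.
      rewrite Hhe, (proj2 (phi_unit y)).
      econstructor; [exact Hpn|now right; right|constructor; apply gnode_GX].
    + destruct (IH i ltac:(lia) c Hc) as (x & n & Hw). exists x, (S (S n)).
      rewrite Hhe. econstructor; [exact Hpn|now right; right|].
      econstructor; [exact (gnode_of_Gamma Hr)|right; exact Hcr|exact Hw].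
Qed.

Lemma phi_ascent_from_leaf i : forall q, Gamma (S i) q -> exists z n, twalk (GX z) q n (phi q).
Proof.
  induction i as [i IH] using Wf_nat.lt_wf_ind; intros q Hq.
  destruct i as [|i].
  - destruct Hq as [z ->]. exists z, 0. constructor. apply gnode_GX.
  - pose proof (gnode_of_Gamma Hq) as Hqn.
    pose proof Hq as (l & c & r & -> & Hl & Hc & _ & _ & Hcl & _).
    pose proof (phi_sandwich Hq) as (_ & Hfh & _ & _).
    destruct i as [|i].
    + destruct Hl as [z ->]. simpl in Hc; subst c. exists z, 1.
      rewrite <- Hfh, (proj1 (phi_unit z)).
      apply walk_cons with (b := GT (GX z) G1 r);
        [apply gnode_GX|now left; left|now constructor].
    + destruct (IH i ltac:(lia) c Hc) as (z & n & Hw). exists z, (n + 2).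
      rewrite <- Hfh.
      replace (phi c ** phi l ** phi (GT l c r))
        with (phi c ** (phi c ** (phi l ** phi (GT l c r))))
        by (rewrite !mul1A, (phi_idem (proj1 (gnode_of_Gamma Hc))); reflexivity).
      apply (walk_app phi_gnode_idem) with c; [exact Hw|].
      econstructor; [exact (gnode_of_Gamma Hc)|left; exact Hcl|].
      apply walk_cons with (b := GT l c r);
        [exact (gnode_of_Gamma Hl)|now left; left|now constructor].
Qed.

Lemma phi_leaves_connected x z : exists n, twalk (GX x) (GX z) n (phi (GX x) ** phi (GX z)).
Proof.
  destruct (classic (x = z)) as [<- | Hxz].
  - exists 0. rewrite (phi_idem (proj1 (gnode_GX x))). constructor. apply gnode_GX.
  - assert (Hh : Gamma 2 (GT (GX z) G1 (GX x))).
    { simpl. exists (GX z), G1, (GX x). repeat split; eauto. congruence. }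
    pose proof (phi_sandwich Hh) as (_ & _ & _ & Hehf).
    rewrite (proj2 (phi_unit x)), (proj1 (phi_unit z)) in Hehf.
    exists 2. rewrite <- Hehf, <- mul1A.
    apply walk_cons with (b := GT (GX z) G1 (GX x)); [apply gnode_GX|now left; right|].
    econstructor; [exact (gnode_of_Gamma Hh)|now right; left|constructor; apply gnode_GX].
Qed.

Lemma phi_connected p q : gnode p -> gnode q -> exists n, twalk p q n (phi p ** phi q).
Proof.
  intros [[[|i] Hp] Hp1] [[[|j] Hq] Hq1]; try contradiction.
  destruct (phi_descent_to_leaf Hp) as (x & n1 & Hw1).
  destruct (phi_ascent_from_leaf Hq) as (z & n3 & Hw3).
  destruct (phi_leaves_connected x z) as (n2 & Hw2).
  exists (n1 + (n2 + n3)).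
  replace (phi p ** phi q) with (phi p ** (phi (GX x) ** phi (GX z) ** phi q))
    by (rewrite !mul1A, (walk_last phi_gnode_idem Hw1), <- mul1A,
          (walk_head phi_gnode_idem Hw3); reflexivity).
  apply (walk_app phi_gnode_idem) with (GX x); [exact Hw1|].
  apply (walk_app phi_gnode_idem) with (GX z); assumption.
Qed.

Lemma skeleton_generated_regular (A : option M -> Prop) :
  (forall a, skeleton_of phi a <-> A a) -> forall s, generated mul A s -> gen_regular A s.
Proof.
  intros HA. apply generated_regular with (vertex := @gnode X) (e := phi) (child := @gchild X).
  - exact phi_gnode_idem.
  - exact phi_child_absorb.
  - exact phi_valley.
  - intros b. rewrite <- HA. unfold skeleton_of, gnode. firstorder.
  - exact phi_connected.
Qed.

Lemma phi_gnode_some : (forall x, exists s, phi (GX x) = Some s) ->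
  forall g, gnode g -> exists s, phi g = Some s.
Proof.
  intros HX g [[i Hg] Hg1]. revert i Hg Hg1.
  induction g as [|x|l IHl c _ r _]; intros i Hg Hg1; [contradiction|apply HX|].
  destruct (Gamma_GT_inv Hg) as (j & -> & Hl & _).
  destruct (IHl _ Hl (proj2 (gnode_of_Gamma Hl))) as [sl Hsl].
  pose proof (phi_sandwich Hg) as (_ & Hfh & _).
  destruct (phi (GT l c r)) as [s|] eqn:Eg; [eauto|].
  rewrite Hsl in Hfh. destruct (phi c); discriminate.
Qed.

Lemma skeleton_generated_some (A : option M -> Prop) :
  (forall x, exists s, phi (GX x) = Some s) -> (forall a, skeleton_of phi a <-> A a) ->
  forall a, generated mul A a -> exists s, a = Some s.
Proof.
  intros HX HA a Ha. apply Ha.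
  - intros b Hb. apply HA in Hb as (g & Hg & Hg1 & <-).
    now apply phi_gnode_some; [|split].
  - intros b c [sb ->] [sc ->]. now exists (mul sb sc).
Qed.

End SkeletonMapping.

Section SkeletonInRegularSubsemigroup.
Variable X : Type.
Variable phi' : X -> M.
Hypothesis phi'_idem : forall x, mul (phi' x) (phi' x) = phi' x.
Hypothesis phi'_inj : forall x y, phi' x = phi' y -> x = y.
Variable T : M -> Prop.
Hypothesis T_regular : regular_subsemigroup mul T.
Hypothesis T_phi' : forall x, T (phi' x).

Definition in_T (a : option M) := exists t, a = Some t /\ T t.

Lemma in_T_mul a b : in_T a -> in_T b -> in_T (a ** b).
Proof.
  intros (t & -> & Ht) (u & -> & Hu). exists (mul t u). split; [reflexivity|].
  now apply T_regular.
Qed.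

Lemma sandwich_in_T e f : in_T e -> in_T f -> idem1 mul e -> idem1 mul f ->
  exists h, in_T h /\ sandwich mul e f h.
Proof.
  intros He Hf Hee Hff.
  destruct (in_T_mul He Hf) as (t & Ht & HTt).
  destruct (proj2 T_regular t HTt) as (x & HTx & Hx).
  assert (Hx' : in_T (Some x)) by now exists x.
  exists (f ** Some x ** (e ** f) ** Some x ** e). split.
  - repeat apply in_T_mul; auto.
  - apply sandwich_of_inverse; auto. rewrite Ht. simpl. now rewrite Hx.
Qed.

(* The default [None] is never chosen on Gamma(X): see [phiT_GT_spec]. *)
Definition pick_sandwich (e f : option M) : option M :=
  epsilon (inhabits None) (fun h => in_T h /\ sandwich mul e f h).

Fixpoint phiT (g : gtree X) : option M :=
  match g with
  | G1 => None
  | GX x => Some (phi' x)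
  | GT l c r => pick_sandwich (phiT r ** phiT c) (phiT c ** phiT l)
  end.

Definition phiT_good (g : gtree X) :=
  idem1 mul (phiT g) /\ (g <> G1 -> in_T (phiT g)) /\
  (forall a, gchild a g -> phiT g ** phiT a ** phiT g = phiT g).

Lemma in_T_mul_good a g : in_T a -> phiT_good g -> in_T (a ** phiT g) /\ in_T (phiT g ** a).
Proof.
  intros Ha (_ & Hg & _). destruct (classic (g = G1)) as [-> | Hg1].
  - simpl. now rewrite mul1_none_r.
  - split; apply in_T_mul; auto.
Qed.

Lemma phiT_GT_spec j l c r : Gamma (S (S j)) (GT l c r) ->
  phiT_good l -> phiT_good c -> phiT_good r ->
  in_T (phiT (GT l c r)) /\
  sandwich mul (phiT r ** phiT c) (phiT c ** phiT l) (phiT (GT l c r)).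
Proof.
  intros Hg Hl Hc Hr.
  destruct (Gamma_GT_inv Hg) as (j' & _ & Hlj & _ & Hrj & _ & Hcl & Hcr).
  destruct Hl as (_ & Hl_T & Hl_abs), Hr as (_ & Hr_T & Hr_abs).
  change (phiT (GT l c r)) with (pick_sandwich (phiT r ** phiT c) (phiT c ** phiT l)).
  unfold pick_sandwich. apply epsilon_spec, sandwich_in_T.
  - exact (proj1 (in_T_mul_good (Hr_T (proj2 (gnode_of_Gamma Hrj))) Hc)).
  - exact (proj2 (in_T_mul_good (Hl_T (proj2 (gnode_of_Gamma Hlj))) Hc)).
  - exact (proj1 (absorbed_products_idem (Hr_abs c Hcr))).
  - exact (proj2 (absorbed_products_idem (Hl_abs c Hcl))).
Qed.

Lemma phiT_good_Gamma g : forall i, Gamma i g -> phiT_good g.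
Proof.
  induction g as [|x|l IHl c IHc r IHr]; intros i Hg.
  - split; [reflexivity|]. split; [easy|]. now intros a [-> | ->].
  - assert (Hx : idem1 mul (phiT (GX x))) by (unfold idem1; simpl; now rewrite phi'_idem).
    split; [exact Hx|]. split; [intros _; now exists (phi' x)|]. now intros a [-> | ->].
  - destruct (Gamma_GT_inv Hg) as (j & -> & Hl & Hc & Hr & _).
    pose proof (IHc _ Hc) as Hc_good.
    destruct (phiT_GT_spec Hg (IHl _ Hl) Hc_good (IHr _ Hr)) as [HT Hsw].
    split; [exact (proj1 Hsw)|]. split; [easy|].
    destruct (sandwich_absorbs (proj1 Hc_good) Hsw) as [Habs_l Habs_r].
    intros a [-> | ->]; cbn [glft grgt]; assumption.
Qed.

Lemma phiT_skeleton : skeleton_mapping mul phiT.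
Proof.
  split; [|split; [|split; [|split]]].
  - intros g [i Hg]. exact (proj1 (phiT_good_Gamma Hg)).
  - intros x. now exists (phi' x).
  - intros x y E. injection E. apply phi'_inj.
  - easy.
  - intros i l c r Hg. destruct (Gamma_GT_inv Hg) as (j & _ & Hl & Hc & Hr & _).
    exact (proj2 (phiT_GT_spec Hg (phiT_good_Gamma Hl) (phiT_good_Gamma Hc)
                                  (phiT_good_Gamma Hr))).
Qed.

Lemma phiT_extends : extends phiT phi'.
Proof. now intros x. Qed.

Lemma phiT_gnode_in_T g : gnode g -> in_T (phiT g).
Proof. intros [[i Hg] Hg1]. exact (proj1 (proj2 (phiT_good_Gamma Hg)) Hg1). Qed.

Lemma skeleton_generated_sub (A : option M -> Prop) :
  (forall a, skeleton_of phiT a <-> A a) -> forall s, generated mul A (Some s) -> T s.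
Proof.
  intros HA s Hs.
  assert (Hs_T : in_T (Some s)).
  { apply Hs; [|intros b c; apply in_T_mul].
    intros b Hb. apply HA in Hb as (g & Hg & Hg1 & <-).
    now apply phiT_gnode_in_T. }
  destruct Hs_T as (t & [= ->] & Ht). exact Ht.
Qed.

End SkeletonInRegularSubsemigroup.
End Skeletons.

Unset Implicit Arguments.

Theorem proposition5p6
  (S : Type) (mul : S -> S -> S)
  (mul_assoc : forall a b c, mul a (mul b c) = mul (mul a b) c)
  (X : Type) (X_nonempty : inhabited X)
  (phi' : X -> S)
  (phi'_inj : forall x y, phi' x = phi' y -> x = y)
  (phi'_idem : forall x, mul (phi' x) (phi' x) = phi' x)
  (A : option S -> Prop)
  (hA : unique_skeleton mul phi' A) :
  (* <A> is a subsemigroup of S ... *)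
  (forall a, generated mul A a -> exists s, a = Some s) /\
  (* ... which is regular and contains X phi' ... *)
  regular_subsemigroup mul (fun s => generated mul A (Some s)) /\
  (forall x, generated mul A (Some (phi' x))) /\
  (* ... and is contained in every regular subsemigroup of S containing X phi' *)
  (forall T : S -> Prop, regular_subsemigroup mul T -> (forall x, T (phi' x)) ->
     forall s, generated mul A (Some s) -> T s) /\
  (* in particular, if <A> = S, then S is regular and has no proper regular
     subsemigroup containing X phi' *)
  ((forall s, generated mul A (Some s)) ->
     regular_semigroup mul /\
     (forall T : S -> Prop, regular_subsemigroup mul T -> (forall x, T (phi' x)) ->
        forall s, T s)).
Proof.
  destruct hA as [[phi [Hskel Hext]] Huniq].
  pose proof (Huniq phi Hskel Hext) as HA.
  destruct Hskel as (Hidem & HX & _ & Hunit & Hsand).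
  assert (HA_some : forall a, generated mul A a -> exists s, a = Some s).
  { apply (skeleton_generated_some Hsand); [|exact HA].
    intros x. destruct (HX x) as (s & Hs & _). eauto. }
  assert (HA_min : forall T, regular_subsemigroup mul T -> (forall x, T (phi' x)) ->
    forall s, generated mul A (Some s) -> T s).
  { intros T HT HTphi. apply (skeleton_generated_sub mul_assoc phi'_idem HT HTphi).
    apply Huniq; [exact (phiT_skeleton mul_assoc phi'_idem phi'_inj HT HTphi)|].
    apply phiT_extends. }
  assert (HA_reg : regular_subsemigroup mul (fun s => generated mul A (Some s))).
  { split; [intros a b; apply generated_mul|].
    intros a Ha.
    destruct (skeleton_generated_regular mul_assoc Hidem Hunit Hsand HA Ha) as (b & Hb & Hab).
    destruct (HA_some b Hb) as [b' ->]. exists b'. split; [exact Hb|]. now injection Hab. }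
  split; [exact HA_some|]. split; [exact HA_reg|]. split; [|split; [exact HA_min|]].
  - intros x T HAT _. apply HAT, HA. exists (GX x).
    rewrite Hext. now split; [exists 1; exists x|].
  - intros Hall. split.
    + intros a. destruct (proj2 HA_reg a (Hall a)) as (b & _ & Hb). eauto.
    + intros T HT HTphi s. exact (HA_min T HT HTphi s (Hall s)).
Qed.
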